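(* Let $f^*\in L^2(\mathcal D)$ with $\mathbb E_{x\sim\mathcal D}[f^*(x)^2]=1$. Let $f_{\mathrm{teacher}}$ be shrinkage-optimal with respect to $f^*$ and let $f_{\mathrm{student}}$ be any function with $\mathbb E_x[f_{\mathrm{student}}(x)^2]\le\mathbb E_x[f_{\mathrm{teacher}}(x)^2]$. With $\mathcal L_{TE}=\mathbb E_x[(f_{\mathrm{teacher}}-f^* )^2]$ and $\mathcal L_{ST}=\mathbb E_x[(f_{\mathrm{student}}-f^* )^2]$, $$\mathcal L_{ST}\ \ge\ \big(1-\sqrt{1-\mathcal L_{TE}}\big)^2\ \ge\ \frac14\,\mathcal L_{TE}^2 .$$
   Context: $\mathcal D$ is a probability distribution on an input space $\mathcal X$. Shrinkage optimality: given $\hat f,f_{\mathrm{train}}:\mathcal X\to\mathbb R$, $\hat f$ is shrinkage-optimal with respect to $f_{\mathrm{train}}$ if for every $0\le\alpha\le1$, $\mathbb E_x[(\hat f(x)-f_{\mathrm{train}}(x))^2]\le\mathbb E_x[(\alpha\hat f(x)-f_{\mathrm{train}}(x))^2]$. All functions are in $L^2(\mathcal D)$. *)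

From mathcomp Require Import all_boot all_order all_algebra.
From mathcomp Require Import all_classical all_reals all_analysis.
Set Implicit Arguments. Unset Strict Implicit. Unset Printing Implicit Defensive.
Import Order.TTheory GRing.Theory Num.Theory.
Local Open Scope ring_scope.

Definition inL2 (d : measure_display) (T : measurableType d) (R : realType)
  (P : probability T R) (f : T -> R) : Prop :=
  measurable_fun setT f /\ P.-integrable setT (fun x => ((f x) ^+ 2)%:E).

Definition Ex (d : measure_display) (T : measurableType d) (R : realType)
  (P : probability T R) (f : T -> R) : R := Rintegral P setT f.

Definition shrinkage_optimal (d : measure_display) (T : measurableType d)
  (R : realType) (P : probability T R) (fhat ftrain : T -> R) : Prop :=
  forall alpha : R, 0 <= alpha <= 1 ->
    Ex P (fun x => (fhat x - ftrain x) ^+ 2)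
    <= Ex P (fun x => (alpha * fhat x - ftrain x) ^+ 2).

(** The teacher's shrinkage optimality, tested at [alpha = 0] and at
    [alpha = <f_T, f*> / |f_T|^2], forces [|f_T|^2 <= <f_T, f*>], hence
    [L_TE <= 1 - |f_T|^2], i.e. [|f_S| <= |f_T| <= sqrt (1 - L_TE)].  By the
    reverse triangle inequality in [L^2], [L_ST >= (1 - |f_S|)^2], which is
    antitone in [|f_S| <= 1].  The last bound is [sqrt (1 - L) <= 1 - L / 2]. *)
From mathcomp Require Import all_boot all_order all_algebra.
From mathcomp Require Import all_classical all_reals all_analysis.
From mathcomp Require Import measurable_realfun ring lra.
Set Implicit Arguments. Unset Strict Implicit.
Import Order.TTheory GRing.Theory Num.Theory.
Local Open Scope ring_scope.

Section L2_inner_product.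
Variables (d : measure_display) (T : measurableType d) (R : realType).
Variable P : probability T R.

Local Notation integrable f := (P.-integrable setT (EFin \o f)).

Lemma integrable_scale (k : R) (f : T -> R) :
  integrable f -> integrable (fun x => k * f x).
Proof.
by move=> If; apply: eq_integrable (integrableZl measurableT k If).
Qed.

Lemma integrable_add (f g : T -> R) :
  integrable f -> integrable g -> integrable (fun x => f x + g x).
Proof. by move=> If Ig; exact: (integrableD measurableT If Ig). Qed.

Lemma inL2_integrable_mul (g h : T -> R) :
  inL2 P g -> inL2 P h -> integrable (fun x => g x * h x).
Proof.
move=> [mg Ig] [mh Ih].
apply: (le_integrable measurableT (g := EFin \o (fun x => g x ^+ 2 + h x ^+ 2))).
- by apply/measurable_EFinP; exact: measurable_funM.
- move=> x _ /=; rewrite lee_fin [X in _ <= X]ger0_norm ?addr_ge0 ?sqr_ge0 // normrM.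
  have := sqr_ge0 (`|g x| - `|h x|).
  by rewrite sqrrB !real_normK ?num_real //; nra.
- exact: integrable_add.
Qed.

Lemma Ex_sqr_ge0 (f : T -> R) : 0 <= Ex P (fun x => f x ^+ 2).
Proof. by apply: Rintegral_ge0 => x _; exact: sqr_ge0. Qed.

Lemma Ex_sqr_lincomb (g h : T -> R) (a b : R) : inL2 P g -> inL2 P h ->
  Ex P (fun x => (a * g x - b * h x) ^+ 2) =
  a ^+ 2 * Ex P (fun x => g x ^+ 2) - 2 * a * b * Ex P (fun x => g x * h x)
  + b ^+ 2 * Ex P (fun x => h x ^+ 2).
Proof.
move=> Lg Lh; have Ig2 := Lg.2; have Ih2 := Lh.2.
have Igh := inL2_integrable_mul Lg Lh.
rewrite /Ex (eq_Rintegral _ (g := fun x =>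
  a ^+ 2 * g x ^+ 2 + (- (2 * a * b)) * (g x * h x) + b ^+ 2 * h x ^+ 2));
  last by move=> x _; ring.
rewrite !RintegralD ?RintegralZl ?mulNr //;
  by do ?apply: integrable_add; apply: integrable_scale.
Qed.

Lemma Ex_sqr_sub (g h : T -> R) : inL2 P g -> inL2 P h ->
  Ex P (fun x => (g x - h x) ^+ 2) =
  Ex P (fun x => g x ^+ 2) - 2 * Ex P (fun x => g x * h x)
  + Ex P (fun x => h x ^+ 2).
Proof.
move=> Lg Lh; have := Ex_sqr_lincomb 1 1 Lg Lh.
by under eq_fun do rewrite !mul1r; move->; ring.
Qed.

Lemma Ex_cauchy_schwarz (g h : T -> R) : inL2 P g -> inL2 P h ->
  Ex P (fun x => g x * h x) ^+ 2
  <= Ex P (fun x => g x ^+ 2) * Ex P (fun x => h x ^+ 2).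
Proof.
move=> Lg Lh.
set gg := Ex P (fun x => g x ^+ 2); set hh := Ex P (fun x => h x ^+ 2).
set gh := Ex P (fun x => g x * h x).
have hg_gh : Ex P (fun x => h x * g x) = gh by congr Ex; apply: funext => x; ring.
have gg0 : 0 <= gg := Ex_sqr_ge0 g; have hh0 : 0 <= hh := Ex_sqr_ge0 h.
have := Ex_sqr_ge0 (fun x => hh * g x - gh * h x).
rewrite Ex_sqr_lincomb // -/gg -/gh -/hh => Hg.
have := Ex_sqr_ge0 (fun x => gg * h x - gh * g x).
rewrite Ex_sqr_lincomb // hg_gh -/gg -/hh => Hh.
have := Ex_sqr_ge0 (fun x => 1 * g x - 1 * h x).
have := Ex_sqr_ge0 (fun x => 1 * g x - (-1) * h x).
rewrite !Ex_sqr_lincomb // -/gg -/gh -/hh => Hp Hm.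
(* [hh * (gg * hh - gh^2) >= 0] and its mirror; the two last facts treat [gg = hh = 0]. *)
have [gg_gt0 | ] := ltP 0 gg; first nra.
have [hh_gt0 | ] := ltP 0 hh; first nra.
nra.
Qed.

Lemma Ex_sqr_sub_ge (g h : T -> R) : inL2 P g -> inL2 P h ->
  (Num.sqrt (Ex P (fun x => g x ^+ 2)) - Num.sqrt (Ex P (fun x => h x ^+ 2))) ^+ 2
  <= Ex P (fun x => (g x - h x) ^+ 2).
Proof.
move=> Lg Lh; rewrite Ex_sqr_sub //.
have := Ex_cauchy_schwarz Lg Lh.
set gg := Ex P (fun x => g x ^+ 2); set hh := Ex P (fun x => h x ^+ 2).
set gh := Ex P (fun x => g x * h x) => CS.
have gg0 : 0 <= gg := Ex_sqr_ge0 g; have hh0 : 0 <= hh := Ex_sqr_ge0 h.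
have gh_le : gh <= Num.sqrt gg * Num.sqrt hh.
  by rewrite (le_trans (ler_norm gh)) // -sqrtr_sqr -sqrtrM // ler_wsqrtr.
rewrite sqrrB !sqr_sqrtr //; lra.
Qed.

Lemma shrinkage_optimal_sqr_le_inner (fhat f : T -> R) :
  inL2 P fhat -> inL2 P f -> shrinkage_optimal P fhat f ->
  Ex P (fun x => fhat x ^+ 2) <= Ex P (fun x => fhat x * f x).
Proof.
move=> Lhat Lf opt.
set a := Ex P (fun x => fhat x ^+ 2); set b := Ex P (fun x => fhat x * f x).
have risk al : Ex P (fun x => (al * fhat x - f x) ^+ 2)
    = al ^+ 2 * a - 2 * al * b + Ex P (fun x => f x ^+ 2).
  have := Ex_sqr_lincomb al 1 Lhat Lf.
  by under eq_fun do rewrite mul1r; move->; rewrite -/a -/b; ring.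
have risk1 : Ex P (fun x => (fhat x - f x) ^+ 2)
    = Ex P (fun x => (1 * fhat x - f x) ^+ 2).
  by congr Ex; apply: funext => x; rewrite mul1r.
have a0 : 0 <= a := Ex_sqr_ge0 fhat.
have := opt 0; rewrite risk1 !risk lexx ler01 => /(_ isT) a_le_2b.
rewrite leNgt; apply/negP => b_lt_a.
have a_gt0 : 0 < a by nra.
have := opt (b / a); rewrite risk1 !risk divr_ge0 ?ler_pdivrMr //=; try nra.
rewrite mul1r ltW //= => /(_ isT) opt_ba.
have : a * (a - 2 * b) <= a * ((b / a) ^+ 2 * a - 2 * (b / a) * b).
  by rewrite ler_pM2l //; lra.
have -> : a * ((b / a) ^+ 2 * a - 2 * (b / a) * b) = - b ^+ 2.
  by field; rewrite gt_eqF.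
nra.
Qed.

Lemma shrinkage_optimal_risk_le (fhat f : T -> R) :
  inL2 P fhat -> inL2 P f -> shrinkage_optimal P fhat f ->
  Ex P (fun x => (fhat x - f x) ^+ 2)
  <= Ex P (fun x => f x ^+ 2) - Ex P (fun x => fhat x ^+ 2).
Proof.
move=> Lhat Lf opt; have := shrinkage_optimal_sqr_le_inner Lhat Lf opt.
rewrite Ex_sqr_sub //; lra.
Qed.

End L2_inner_product.

Lemma sqr_subr_sqrt_ge (R : rcfType) (L : R) : 0 <= L <= 1 ->
  L ^+ 2 / 4 <= (1 - Num.sqrt (1 - L)) ^+ 2.
Proof.
move=> /andP[L0 L1].
have v0 : 0 <= Num.sqrt (1 - L) := sqrtr_ge0 _.
have vv : Num.sqrt (1 - L) ^+ 2 = 1 - L by rewrite sqr_sqrtr // subr_ge0.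
have v_le : Num.sqrt (1 - L) <= 1 - L / 2 by nra.
nra.
Qed.

Lemma sqr_subr_le_antitone (R : realDomainType) (u v : R) :
  0 <= u -> u <= v -> v <= 1 -> (1 - v) ^+ 2 <= (1 - u) ^+ 2.
Proof. by move=> *; nra. Qed.

Theorem theorem4p5 (d : measure_display) (T : measurableType d) (R : realType)
  (P : probability T R) (fstar fteacher fstudent : T -> R) :
  inL2 P fstar -> inL2 P fteacher -> inL2 P fstudent ->
  Ex P (fun x => fstar x ^+ 2) = 1 ->
  shrinkage_optimal P fteacher fstar ->
  Ex P (fun x => fstudent x ^+ 2) <= Ex P (fun x => fteacher x ^+ 2) ->
  let LTE := Ex P (fun x => (fteacher x - fstar x) ^+ 2) in
  let LST := Ex P (fun x => (fstudent x - fstar x) ^+ 2) in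
  (1 - Num.sqrt (1 - LTE)) ^+ 2 <= LST /\
  LTE ^+ 2 / 4 <= (1 - Num.sqrt (1 - LTE)) ^+ 2.
Proof.
move=> Lstar Lteacher Lstudent norm1 opt student_le LTE LST.
have LTE_le := shrinkage_optimal_risk_le Lteacher Lstar opt.
rewrite norm1 -/LTE in LTE_le.
have LTE_ge0 : 0 <= LTE := Ex_sqr_ge0 P _.
have teacher_ge0 := Ex_sqr_ge0 P fteacher.
have student_ge0 := Ex_sqr_ge0 P fstudent.
have student_norm_le : Num.sqrt (Ex P (fun x => fstudent x ^+ 2))
    <= Num.sqrt (1 - LTE) by apply: ler_wsqrtr; lra.
have sqrt_le1 : Num.sqrt (1 - LTE) <= 1.
  by rewrite -[X in _ <= X]sqrtr1 ler_wsqrtr //; lra.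
split; last by apply: sqr_subr_sqrt_ge; rewrite LTE_ge0 /=; lra.
apply: le_trans (Ex_sqr_sub_ge Lstudent Lstar).
rewrite norm1 sqrtr1 -[X in _ <= X]sqrrN opprB.
exact: sqr_subr_le_antitone (sqrtr_ge0 _) student_norm_le sqrt_le1.
Qed.
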